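(* Let $\mathbb K$ be a naturally ordered positive semiring, let $\mathrm{q}_{\mathrm{path}}=\exists x\exists y\exists z\,(R(x;y)\wedge S(y;z))$ with $\Sigma$ the key constraints stating that the first attribute of $R$ and the first attribute of $S$ are keys. Then for every $\mathbb K$-database $\mathfrak D$ with active domain $D$, \[\mathrm{mCA}_{\mathbb K}(\mathrm{q}_{\mathrm{path}},\Sigma,\mathfrak D)=\sum_{a\in D}\ \min_{b\in D:\,R^{\mathfrak D}(a,b)\neq0}\Big(R^{\mathfrak D}(a,b)\times\min_{c\in D:\,S^{\mathfrak D}(b,c)\neq 0}S^{\mathfrak D}(b,c)\Big),\] with the convention $\min(\emptyset)=0$. Equivalently, this value is the value on $\mathfrak D$ of the $\mathcal L_{\mathbb K}$-sentence $\exists x\,\nabla_{R(x,y)}y.\big(R(x,y)\times\nabla_{S(y,z)}z.\,S(y,z)\big)$, where $\nabla_G$ denotes guarded minimization (minimum over the elements satisfying the guard with non-zero value, and $0$ if there are none).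
   Context: A commutative semiring $\mathbb K=(K,+,\times,0,1)$ is positive if $a+b=0$ implies $a=b=0$ and it has no zero divisors; naturally ordered if $a\le_{\mathbb K}b:\iff\exists c\,(a+c=b)$ is a total order; minima are w.r.t. $\le_{\mathbb K}$. A $\mathbb K$-database $\mathfrak D$ assigns to $R,S$ binary functions $R^{\mathfrak D},S^{\mathfrak D}:\mathrm A^2\to K$ with finite support; the active domain $D$ is the non-empty set of values occurring in tuples with non-zero annotation. $\mathfrak D'\subseteq\mathfrak D$ means supports are included and values agree on the support of $\mathfrak D'$. A repair of $\mathfrak D$ is a $\subseteq$-maximal $\mathfrak D'\subseteq\mathfrak D$ such that no two distinct tuples with non-zero annotation in $R^{\mathfrak D'}$ (resp. $S^{\mathfrak D'}$) share their first component. The value of a closed CQ $\exists\vec y(R_1(\vec z_1)\wedge\dots\wedge R_k(\vec z_k))$ on $\mathfrak D$ is $\sum_{\vec a\in D^{|\vec y|}}\prod_i R_i^{\mathfrak D}(\vec z_i[\vec a/\vec y])$, and $\mathrm{mCA}_{\mathbb K}(q,\Sigma,\mathfrak D)$ is the minimum of this value over all repairs of $\mathfrak D$. *)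

From HB Require Import structures.
From mathcomp Require Import all_boot all_algebra.
From mathcomp Require Import finmap.
From Stdlib Require Import ClassicalEpsilon.
Set Implicit Arguments. Unset Strict Implicit. Unset Printing Implicit Defensive.
Import GRing.Theory.
Local Open Scope fset_scope.
Local Open Scope ring_scope.

Section Semiring.
Variable K : comPzSemiRingType.

Definition positive_semiring : Prop :=
  (forall a b : K, a + b = 0 -> a = 0 /\ b = 0) /\
  (forall a b : K, a * b = 0 -> a = 0 \/ b = 0).

Definition leK (a b : K) : Prop := exists c, a + c = b.

(* naturally ordered: the natural preorder is a total order
   (reflexivity and transitivity always hold) *)
Definition naturally_ordered : Prop :=
  (forall a b : K, leK a b -> leK b a -> a = b) /\
  (forall a b : K, leK a b \/ leK b a).

Definition minK2 (a b : K) : K :=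
  if excluded_middle_informative (leK a b) then a else b.

Definition minK (s : seq K) : K :=
  match s with
  | [::] => 0
  | x :: s' => foldr minK2 x s'
  end.

Definition is_minimum (P : K -> Prop) (m : K) : Prop :=
  P m /\ forall x, P x -> leK m x.
End Semiring.

Section Databases.
Variables (A : choiceType) (K : comPzSemiRingType).

Record db := DB {
  relR : {fsfun A * A -> K with 0};
  relS : {fsfun A * A -> K with 0} }.

Definition adom (d : db) : {fset A} :=
  [fset t.1 | t in finsupp (relR d)] `|` [fset t.2 | t in finsupp (relR d)]
  `|` [fset t.1 | t in finsupp (relS d)] `|` [fset t.2 | t in finsupp (relS d)].

Definition subdb (d' d : db) : Prop :=
  (forall t, relR d' t != 0 -> relR d t != 0 /\ relR d t = relR d' t) /\
  (forall t, relS d' t != 0 -> relS d t != 0 /\ relS d t = relS d' t).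

Definition satisfies_keys (d : db) : Prop :=
  (forall a b b', relR d (a, b) != 0 -> relR d (a, b') != 0 -> b = b') /\
  (forall a b b', relS d (a, b) != 0 -> relS d (a, b') != 0 -> b = b').

Definition repair (d' d : db) : Prop :=
  subdb d' d /\ satisfies_keys d' /\
  (forall d'', subdb d'' d -> satisfies_keys d'' -> subdb d' d'' -> d'' = d').

Definition qpath_value (d : db) : K :=
  \sum_(x <- adom d) \sum_(y <- adom d) \sum_(z <- adom d)
     relR d (x, y) * relS d (y, z).

Definition is_mCA_qpath (d : db) (m : K) : Prop :=
  is_minimum (fun v => exists d', repair d' d /\ v = qpath_value d') m.

Definition qpath_rhs (d : db) : K :=
  \sum_(a <- adom d)
     minK [seq relR d (a, b) *
               minK [seq relS d (b, c) | c <- adom d & relS d (b, c) != 0]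
          | b <- adom d & relR d (a, b) != 0].
End Databases.

From HB Require Import structures.
From mathcomp Require Import all_boot all_algebra.
From mathcomp Require Import finmap.
From Stdlib Require Import Classical ClassicalEpsilon.
Set Implicit Arguments. Unset Strict Implicit. Unset Printing Implicit Defensive.
Import GRing.Theory.
Local Open Scope fset_scope.
Local Open Scope ring_scope.

(* A repair chooses, independently in R and in S, exactly one tuple in every
   key block: it is a maximal keyed subrelation of R and of S.  The repair that
   keeps in each S-block b a cheapest tuple, of weight m_S(b), and in each
   R-block a a tuple minimising R(a,b) * m_S(b), has value the right-hand
   side.  Any other repair is at least as expensive block by block, because in
   a naturally ordered semiring a sum dominates each of its summands and
   multiplication is monotone. *)

Section NaturalOrder.
Variable K : comPzSemiRingType.

Lemma leK_refl (a : K) : leK a a.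
Proof. by exists 0; rewrite addr0. Qed.

Lemma leK_trans (a b c : K) : leK a b -> leK b c -> leK a c.
Proof. by move=> [x <-] [y <-]; exists (x + y); rewrite addrA. Qed.

Lemma le0K (a : K) : leK 0 a.
Proof. by exists a; rewrite add0r. Qed.

Lemma leKD (a b c e : K) : leK a b -> leK c e -> leK (a + c) (b + e).
Proof. by move=> [x <-] [y <-]; exists (x + y); rewrite -!addrA (addrCA c). Qed.

Lemma leK_mul2l (c a b : K) : leK a b -> leK (c * a) (c * b).
Proof. by move=> [x <-]; exists (c * x); rewrite mulrDr. Qed.

Lemma leK_sum (I : eqType) (s : seq I) (F G : I -> K) :
  (forall i, i \in s -> leK (F i) (G i)) ->
  leK (\sum_(i <- s) F i) (\sum_(i <- s) G i).
Proof.
elim: s => [|x s IH] FG; first by rewrite !big_nil; apply: leK_refl.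
rewrite !big_cons; apply: leKD; first by apply: FG; rewrite mem_head.
by apply: IH => i si; apply: FG; rewrite inE si orbT.
Qed.

Lemma leK_sum_term (I : eqType) (s : seq I) (F : I -> K) i :
  i \in s -> leK (F i) (\sum_(j <- s) F j).
Proof.
elim: s => // x s IH; rewrite inE big_cons => /orP[/eqP->|si].
  by exists (\sum_(j <- s) F j).
by have [y <-] := IH si; exists (F x + y); rewrite addrCA.
Qed.

Hypothesis leK_total : forall a b : K, leK a b \/ leK b a.

Lemma minK2_l (a b : K) : leK (minK2 a b) a.
Proof.
rewrite /minK2; case: excluded_middle_informative => ab; first exact: leK_refl.
by case: (leK_total a b).
Qed.

Lemma minK2_r (a b : K) : leK (minK2 a b) b.
Proof. by rewrite /minK2; case: excluded_middle_informative => ab //; apply: leK_refl. Qed.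

Lemma minK_le (s : seq K) x : x \in s -> leK (minK s) x.
Proof.
case: s => // y s /=; elim: s x => [|z s IH] x /=.
  by rewrite inE => /eqP->; apply: leK_refl.
rewrite !inE => /or3P[/eqP->|/eqP->|xs].
- by apply: leK_trans (minK2_r _ _) _; apply: IH; rewrite mem_head.
- exact: minK2_l.
- by apply: leK_trans (minK2_r _ _) _; apply: IH; rewrite inE xs orbT.
Qed.

End NaturalOrder.

Lemma minK_mem (K : comPzSemiRingType) (s : seq K) : s != [::] -> minK s \in s.
Proof.
case: s => // x s _ /=; elim: s => [|y s IH] /=; first by rewrite mem_head.
rewrite /minK2; case: excluded_middle_informative => yx; first by rewrite !inE eqxx orbT.
by move: IH; rewrite !inE => /orP[->|->]; rewrite ?orbT.
Qed.

Section ArgMin.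
Variables (K : comPzSemiRingType) (T : eqType).

Definition argminK (x0 : T) (s : seq T) (F : T -> K) : T :=
  nth x0 s (find (fun x => F x == minK (map F s)) s).

Lemma argminK_spec x0 s F : s != [::] ->
  argminK x0 s F \in s /\ F (argminK x0 s F) = minK (map F s).
Proof.
move=> s0; have : minK (map F s) \in map F s by rewrite minK_mem // -size_eq0 size_map size_eq0.
case/mapP=> x xs Fx; have hasF : has (fun x => F x == minK (map F s)) s.
  by apply/hasP; exists x; rewrite // Fx.
by split; [rewrite mem_nth // -has_find | exact/eqP/(nth_find x0 hasF)].
Qed.

End ArgMin.

Section Relations.
Variables (A : choiceType) (K : comPzSemiRingType).
Implicit Types r : {fsfun A * A -> K with 0}.

Definition subrel r' r : Prop :=
  forall t, r' t != 0 -> r t != 0 /\ r t = r' t.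

Definition keyed r : Prop :=
  forall a b b', r (a, b) != 0 -> r (a, b') != 0 -> b = b'.

Definition maximal_keyed r' r : Prop :=
  [/\ subrel r' r, keyed r' &
      forall r'', subrel r'' r -> keyed r'' -> subrel r' r'' -> r'' = r'].

Lemma row_nonzero_or_zero r a :
  (exists b, r (a, b) != 0) \/ (forall b, r (a, b) = 0).
Proof.
have [|none] := classic (exists b, r (a, b) != 0); [by left | right => b].
by apply/eqP; apply: contraT => nz; case: none; exists b.
Qed.

Lemma subrel_finsupp r' r : subrel r' r -> finsupp r' `<=` finsupp r.
Proof. by move=> sub; apply/fsubsetP => t; rewrite !mem_finsupp => /sub[]. Qed.

(* Otherwise the tuple (a, b) could be added to r' without breaking the key. *)
Lemma maximal_keyed_row r' r a b :
  maximal_keyed r' r -> r (a, b) != 0 -> exists b', r' (a, b') != 0.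
Proof.
move=> [sub key max] rab; have [//|row0] := row_nonzero_or_zero r' a.
pose r'' := [fsfun r' with (a, b) |-> r (a, b)].
have r''E t : r'' t = if t == (a, b) then r (a, b) else r' t by rewrite fsfun_withE.
have : r'' = r'.
  apply: max => [t|a' u u'|t r't]; rewrite ?r''E.
  - by case: (eqVneq t (a, b)) => [->|_]; [split | exact: sub].
  - rewrite !xpair_eqE; have [->|_] := eqVneq a' a; last exact: key.
    rewrite !row0 /=.
    by case: (eqVneq u b) => [->|_]; case: (eqVneq u' b) => [->|_]; rewrite ?eqxx.
  - by case: (eqVneq t (a, b)) r't => [->|//]; rewrite row0 eqxx.
by move/(congr1 (fun r => r (a, b))); rewrite r''E eqxx row0 => /eqP; rewrite (negPf rab).
Qed.

Definition restrict_graph r (h : A -> A) : {fsfun A * A -> K with 0} :=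
  [fsfun t in finsupp r => if t.2 == h t.1 then r t else 0].

Lemma restrict_graphE r h a b :
  restrict_graph r h (a, b) = if b == h a then r (a, b) else 0.
Proof.
rewrite /restrict_graph fsfun_fun mem_finsupp /=.
by have [->|_] := eqVneq (r (a, b)) 0; case: ifP.
Qed.

Lemma restrict_graph_maximal r h :
  (forall a b, r (a, b) != 0 -> r (a, h a) != 0) ->
  maximal_keyed (restrict_graph r h) r.
Proof.
move=> hr; split=> [[a b]|a b b'|r'' sub key sub'].
- by rewrite restrict_graphE; case: ifP => _; [split | rewrite eqxx].
- rewrite !restrict_graphE; case: ifP => [/eqP-> _|_]; last by rewrite eqxx.
  by case: ifP => [/eqP->|_]; rewrite ?eqxx.
apply/fsfunP => -[a b]; have [r''0|r''nz] := eqVneq (r'' (a, b)) 0.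
  have [->|/sub'[]] := eqVneq (restrict_graph r h (a, b)) 0; first by rewrite r''0.
  by rewrite r''0 eqxx.
have [rnz rE] := sub _ r''nz.
have /sub'[r''ha _] : restrict_graph r h (a, h a) != 0.
  by rewrite restrict_graphE eqxx (hr _ _ rnz).
by rewrite restrict_graphE -(key _ _ _ r''nz r''ha) eqxx rE.
Qed.

Lemma restrict_graph_sum r h (X : {fset A}) a (G : A -> K) :
  (r (a, h a) != 0 -> h a \in X) ->
  \sum_(b <- X) restrict_graph r h (a, b) * G b = r (a, h a) * G (h a).
Proof.
move=> hX; have [haX|haX] := boolP (h a \in X).
  rewrite (bigD1_seq (h a)) ?fset_uniq //= restrict_graphE eqxx big1 ?addr0 //.
  by move=> b /negPf hb; rewrite restrict_graphE hb mul0r.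
have rha0 : r (a, h a) = 0 by apply/eqP; apply: contraNT haX.
rewrite rha0 mul0r big1 // => b _; rewrite restrict_graphE.
by case: ifP => [/eqP->|_]; rewrite ?rha0 mul0r.
Qed.

End Relations.

Section GuardedMin.
Variables (A : choiceType) (K : comPzSemiRingType).
Variables (X : {fset A}) (r : {fsfun A * A -> K with 0}).
Hypothesis supp_r : forall a b, r (a, b) != 0 -> b \in X.

Definition guarded_min a (F : A -> K) : K :=
  minK [seq F b | b <- X & r (a, b) != 0].

Definition guarded_argmin a (F : A -> K) : A :=
  argminK a [seq b <- X | r (a, b) != 0] F.

Lemma mem_guard a b : (b \in [seq b <- X | r (a, b) != 0]) = (r (a, b) != 0).
Proof. by rewrite mem_filter; have [/supp_r->|] := boolP (r (a, b) != 0). Qed.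

Lemma guarded_min_row0 a F : (forall b, r (a, b) = 0) -> guarded_min a F = 0.
Proof.
move=> row0; rewrite /guarded_min (@eq_filter _ _ pred0) ?filter_pred0 // => b.
by rewrite /= row0 eqxx.
Qed.

Lemma guarded_argmin_spec a b F : r (a, b) != 0 ->
  r (a, guarded_argmin a F) != 0 /\ F (guarded_argmin a F) = guarded_min a F.
Proof.
move=> rab; have guard0 : [seq b <- X | r (a, b) != 0] != [::].
  by apply/eqP => guard0; move: rab; rewrite -mem_guard guard0.
by have [] := argminK_spec a F guard0; rewrite mem_guard.
Qed.

Lemma guarded_argmin_value a (G : A -> K) :
  let h := guarded_argmin a (fun b => r (a, b) * G b) in
  r (a, h) * G h = guarded_min a (fun b => r (a, b) * G b).
Proof.
have [[b rab]|row0] := row_nonzero_or_zero r a; first exact: (guarded_argmin_spec _ rab).2.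
by rewrite /= guarded_min_row0 // row0 mul0r.
Qed.

Hypothesis leK_total : forall a b : K, leK a b \/ leK b a.

Lemma guarded_min_le a b F : r (a, b) != 0 -> leK (guarded_min a F) (F b).
Proof. by move=> rab; apply: minK_le => //; apply: map_f; rewrite mem_guard. Qed.

Lemma guarded_min_le_sum r' a (G G' : A -> K) :
  maximal_keyed r' r -> (forall b, leK (G b) (G' b)) ->
  leK (guarded_min a (fun b => r (a, b) * G b)) (\sum_(b <- X) r' (a, b) * G' b).
Proof.
move=> max GG'; have [[b0 rab0]|row0] := row_nonzero_or_zero r a; last first.
  by rewrite guarded_min_row0 //; apply: le0K.
have [b r'ab] := maximal_keyed_row max rab0; have [sub _ _] := max.
have [rab rE] := sub _ r'ab.
apply: leK_trans (guarded_min_le _ rab) _; rewrite rE.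
apply: leK_trans (leK_mul2l _ (GG' b)) _.
exact: (leK_sum_term (fun b => r' (a, b) * G' b) (supp_r rab)).
Qed.

End GuardedMin.

Section Repairs.
Variables (A : choiceType) (K : comPzSemiRingType).
Implicit Types d : db A K.

Lemma repair_relR d' d : repair d' d -> maximal_keyed (relR d') (relR d).
Proof.
move=> [[subR subS] [[keyR keyS] max]]; split=> // R'' subR'' keyR'' subR'.
by apply: (congr1 (@relR A K) (max (DB R'' (relS d')) _ _ _)); split.
Qed.

Lemma repair_relS d' d : repair d' d -> maximal_keyed (relS d') (relS d).
Proof.
move=> [[subR subS] [[keyR keyS] max]]; split=> // S'' subS'' keyS'' subS'.
by apply: (congr1 (@relS A K) (max (DB (relR d') S'') _ _ _)); split.
Qed.

Lemma maximal_keyed_repair R' S' d :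
  maximal_keyed R' (relR d) -> maximal_keyed S' (relS d) -> repair (DB R' S') d.
Proof.
move=> [subR keyR maxR] [subS keyS maxS]; do 2!split=> //.
by move=> [R'' S''] [/= ? ?] [/= ? ?] [/= ? ?]; congr DB; [apply: maxR | apply: maxS].
Qed.

Lemma adom_relR d a b : relR d (a, b) != 0 -> a \in adom d /\ b \in adom d.
Proof.
rewrite -mem_finsupp => ab; rewrite !inE.
by rewrite (in_imfset _ (fun t : A * A => t.1) ab) (in_imfset _ (fun t : A * A => t.2) ab) !orbT.
Qed.

Lemma adom_relS d a b : relS d (a, b) != 0 -> a \in adom d /\ b \in adom d.
Proof.
rewrite -mem_finsupp => ab; rewrite !inE.
by rewrite (in_imfset _ (fun t : A * A => t.1) ab) (in_imfset _ (fun t : A * A => t.2) ab) !orbT.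
Qed.

Lemma subdb_adom d' d : subdb d' d -> adom d' `<=` adom d.
Proof.
move=> [/subrel_finsupp/fsubsetP subR /subrel_finsupp/fsubsetP subS].
apply: fsetUSS; [apply: fsetUSS; [apply: fsetUSS|]|];
  by apply: subset_imfset => t; first [exact: subR | exact: subS].
Qed.

Lemma qpath_value_subdb d' d : subdb d' d ->
  qpath_value d' = \sum_(x <- adom d) \sum_(y <- adom d)
                     relR d' (x, y) * \sum_(z <- adom d) relS d' (y, z).
Proof.
move=> /subdb_adom sub; rewrite /qpath_value (big_fset_incl _ sub) => [|x _ x']; last first.
  rewrite big1 // => y _; rewrite big1 // => z _.
  have -> : relR d' (x, y) = 0 by apply/eqP; apply: contraNT x' => /adom_relR[].
  by rewrite mul0r.
apply: eq_bigr => x _; rewrite (big_fset_incl _ sub) => [|y _ y']; last first.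
  have -> : relR d' (x, y) = 0 by apply/eqP; apply: contraNT y' => /adom_relR[].
  by rewrite big1 // => z _; rewrite mul0r.
apply: eq_bigr => y _; rewrite mulr_sumr; apply: big_fset_incl => // z _ z'.
have -> : relS d' (y, z) = 0 by apply/eqP; apply: contraNT z' => /adom_relS[].
by rewrite mulr0.
Qed.

End Repairs.

Section OptimalRepair.
Variables (K : comPzSemiRingType) (A : choiceType) (d : db A K).

(* The factor 1 gives the inner minimum the shape [r (a, b) * G b] of the
   outer one, so that the lemmas on guarded minima apply at both levels. *)
Definition min_relS (b : A) : K :=
  guarded_min (adom d) (relS d) b (fun c => relS d (b, c) * 1).

Definition choice_S (b : A) : A :=
  guarded_argmin (adom d) (relS d) b (fun c => relS d (b, c) * 1).

Definition choice_R (a : A) : A :=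
  guarded_argmin (adom d) (relR d) a (fun b => relR d (a, b) * min_relS b).

Definition optimal_repair : db A K :=
  DB (restrict_graph (relR d) choice_R) (restrict_graph (relS d) choice_S).

Let supp_R a b : relR d (a, b) != 0 -> b \in adom d.
Proof. by case/adom_relR. Qed.

Let supp_S a b : relS d (a, b) != 0 -> b \in adom d.
Proof. by case/adom_relS. Qed.

Lemma qpath_rhsE : qpath_rhs d =
  \sum_(a <- adom d) guarded_min (adom d) (relR d) a (fun b => relR d (a, b) * min_relS b).
Proof.
apply: eq_bigr => a _; congr minK; apply: eq_map => b; congr (_ * _).
by congr minK; apply: eq_map => c; rewrite mulr1.
Qed.

Lemma optimal_repairP : repair optimal_repair d.
Proof.
apply: maximal_keyed_repair; apply: restrict_graph_maximal => a b rab.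
  exact: (guarded_argmin_spec supp_R _ rab).1.
exact: (guarded_argmin_spec supp_S _ rab).1.
Qed.

Lemma qpath_value_optimal_repair : qpath_value optimal_repair = qpath_rhs d.
Proof.
rewrite (qpath_value_subdb optimal_repairP.1) qpath_rhsE; apply: eq_bigr => a _ /=.
have sum_S b : \sum_(c <- adom d) restrict_graph (relS d) choice_S (b, c) = min_relS b.
  rewrite (eq_bigr (fun c => restrict_graph (relS d) choice_S (b, c) * 1)) => [|c _].
    by rewrite restrict_graph_sum ?guarded_argmin_value // => /supp_S.
  by rewrite mulr1.
under eq_bigr do rewrite sum_S.
by rewrite restrict_graph_sum ?guarded_argmin_value // => /supp_R.
Qed.

Hypothesis leK_total : forall a b : K, leK a b \/ leK b a.

Lemma qpath_rhs_le_repair d' : repair d' d -> leK (qpath_rhs d) (qpath_value d').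
Proof.
move=> rep; rewrite (qpath_value_subdb rep.1) qpath_rhsE; apply: leK_sum => a _.
apply: guarded_min_le_sum (repair_relR rep) _ => // b.
rewrite (eq_bigr (fun c => relS d' (b, c) * 1)) => [|c _]; last by rewrite mulr1.
by apply: guarded_min_le_sum (repair_relS rep) _ => // c; apply: leK_refl.
Qed.

End OptimalRepair.

Theorem mainTheorem8 (K : comPzSemiRingType) (A : choiceType)
  (hpos : positive_semiring K) (hord : naturally_ordered K)
  (d : db A K) (hne : adom d != fset0) :
  is_mCA_qpath d (qpath_rhs d).
Proof.
split.
  exists (optimal_repair d); split; first exact: optimal_repairP.
  by rewrite qpath_value_optimal_repair.
by move=> _ [d' [rep ->]]; apply: qpath_rhs_le_repair hord.2 _ rep.
Qed.
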